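(* Let $0<\delta<1$ and let $(f_n)_{n\ge1}$ be a sequence of Möbius transformations such that $f_n(\mathbb{D})\subset\mathbb{D}$ and $\operatorname{rad}(f_n(\mathbb{D}))<\delta$ for all $n$. Then $F_n=f_1\cdots f_n$ is a rapid-escape sequence.
   Context: $\mathbb{D}$ is the open unit disc; $\operatorname{rad}(D)$ is the Euclidean radius of a Euclidean disc $D$. $\mathbb{H}^3=\{(x,y,t)\in\mathbb{R}^3:t>0\}$ with the hyperbolic metric $\rho$ induced by the density $ds/t$; $\mathbb{C}$ is identified with the plane $t=0$, so $\overline{\mathbb{C}}$ is the ideal boundary, and Möbius transformations act on $\mathbb{H}^3$ by their Poincaré extensions (as hyperbolic isometries). Let $j=(0,0,1)$. A sequence of Möbius transformations $(F_n)$ is escaping if $\rho(j,F_n(j))\to\infty$, and is a rapid-escape sequence if it is escaping and $\sum_n\exp(-\rho(j,F_n(j)))<+\infty$. *)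

From Stdlib Require Import Reals.
Open Scope R_scope.

Record C := mkC { re : R; im : R }.
Definition Cadd (z w : C) : C := mkC (re z + re w) (im z + im w).
Definition Csub (z w : C) : C := mkC (re z - re w) (im z - im w).
Definition Cmul (z w : C) : C :=
  mkC (re z * re w - im z * im w) (re z * im w + im z * re w).
Definition Cconj (z : C) : C := mkC (re z) (- im z).
Definition Cscale (r : R) (z : C) : C := mkC (r * re z) (r * im z).
Definition C0 : C := mkC 0 0.
Definition Cnorm2 (z : C) : R := re z * re z + im z * im z.
Definition Cabs (z : C) : R := sqrt (Cnorm2 z).

(** A Möbius transformation z |-> (a z + b)/(c z + d), with ad - bc <> 0. *)
Record Mobius := mkMobius {
  ma : C; mb : C; mc : C; md : C;
  mdet_nz : Csub (Cmul ma md) (Cmul mb mc) <> C0 }.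

Definition mdet (f : Mobius) : C := Csub (Cmul (ma f) (md f)) (Cmul (mb f) (mc f)).

(** Action on the finite plane, at points z with c z + d <> 0:
    f(z) = (a z + b) * conj(c z + d) / |c z + d|^2. *)
Definition mob_den (f : Mobius) (z : C) : C := Cadd (Cmul (mc f) z) (md f).
Definition mob_apply (f : Mobius) (z : C) : C :=
  Cscale (/ Cnorm2 (mob_den f z))
    (Cmul (Cadd (Cmul (ma f) z) (mb f)) (Cconj (mob_den f z))).

Definition in_disc (z : C) : Prop := Cabs z < 1.

(** f(D) ⊂ D  (in particular f has no pole in D, so f(D) ⊂ C). *)
Definition maps_disc_into_disc (f : Mobius) : Prop :=
  forall z, in_disc z -> mob_den f z <> C0 /\ in_disc (mob_apply f z).

Definition image_disc_is (f : Mobius) (w : C) (r : R) : Prop :=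
  0 < r /\
  forall y, (exists z, in_disc z /\ mob_den f z <> C0 /\ y = mob_apply f z)
            <-> Cabs (Csub y w) < r.

Definition image_disc_radius_lt (f : Mobius) (delta : R) : Prop :=
  exists w r, image_disc_is f w r /\ r < delta.

(** Upper half-space H^3 : points (z, t) with z in C, t > 0. *)
Record H3pt := mkH3 { hz : C; ht : R }.

Definition j_pt : H3pt := mkH3 C0 1.

(** Poincaré extension of a Möbius map (standard explicit formula):
    f(z + t j) = ( ((a z + b) conj(c z + d) + a conj(c) t^2) / N ,
                   |ad - bc| t / N ),   N = |c z + d|^2 + |c|^2 t^2. *)
Definition poincare_ext (f : Mobius) (p : H3pt) : H3pt :=
  let z := hz p in let t := ht p in
  let N := Cnorm2 (mob_den f z) + Cnorm2 (mc f) * (t * t) in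
  mkH3
    (Cscale (/ N)
       (Cadd (Cmul (Cadd (Cmul (ma f) z) (mb f)) (Cconj (mob_den f z)))
             (Cscale (t * t) (Cmul (ma f) (Cconj (mc f))))))
    (Cabs (mdet f) * t / N).

(** Hyperbolic distance for the metric ds/t on H^3:
    cosh rho(p,q) = 1 + |p - q|^2 / (2 t_p t_q), rho = arcosh(...). *)
Definition arcosh (x : R) : R := ln (x + sqrt (x * x - 1)).
Definition hdist (p q : H3pt) : R :=
  arcosh (1 + (Cnorm2 (Csub (hz p) (hz q)) + (ht p - ht q) * (ht p - ht q))
              / (2 * ht p * ht q)).

Fixpoint comp_act (f : nat -> Mobius) (n : nat) (p : H3pt) : H3pt :=
  match n with
  | O => p
  | S m => comp_act f m (poincare_ext (f (S m)) p)
  end.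

(** Escaping / rapid-escape for a sequence of Möbius maps given through their
    action on H^3, indexed by n >= 1 (G n = F_{n+1}). *)
Definition escaping (G : nat -> H3pt -> H3pt) : Prop :=
  forall M : R, exists N : nat, forall n, (N <= n)%nat -> M < hdist j_pt (G n j_pt).

Definition rapid_escape (G : nat -> H3pt -> H3pt) : Prop :=
  escaping G /\
  exists l : R, infinite_sum (fun n => exp (- hdist j_pt (G n j_pt))) l.

(* Write F_n = f_1 ... f_n as a matrix [[a, b], [c, d]].  The height of F_n(j) is
   |ad - bc| / (|c|^2 + |d|^2), and e^(-rho(j, q)) <= 2 height(q), so it suffices to sum these
   heights.  The image F_n(D) is the disc of radius R_n = |ad - bc| / (|d|^2 - |c|^2), and
   F_(n+1)(D) = F_n(f_(n+1)(D)) where f_(n+1)(D) is a disc of radius < delta inside D; an explicit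
   computation shows that R_n - R_(n+1) is at least (1 - delta)/2 times the height of F_n(j).
   The heights are therefore dominated by a telescoping series of positive radii. *)

From Pilot Require Import Defs.
From Stdlib Require Import Reals Lra Psatz Lia.
(* [Reals] exports a binomial coefficient [C]; re-import [Defs] so that [C] is the complex type. *)
Import Pilot.Defs.
Open Scope R_scope.

(** * Complex numbers *)

Ltac expand_C :=
  repeat match goal with z : C |- _ => destruct z end;
  unfold Cnorm2, Cadd, Csub, Cmul, Cconj, Cscale, C0 in *; simpl in *.

Lemma Cnorm2_ge0 (z : C) : 0 <= Cnorm2 z.
Proof. expand_C; nra. Qed.

Lemma Cnorm2_mul (z w : C) : Cnorm2 (Cmul z w) = Cnorm2 z * Cnorm2 w.
Proof. expand_C; ring. Qed.

Lemma Cnorm2_scale (s : R) (z : C) : Cnorm2 (Cscale s z) = s * s * Cnorm2 z.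
Proof. expand_C; ring. Qed.

Lemma Cnorm2_pos (z : C) : z <> C0 -> 0 < Cnorm2 z.
Proof.
  destruct z as [x y]; unfold Cnorm2; simpl; intros Hz.
  destruct (Req_dec x 0), (Req_dec y 0); try nra.
  subst; contradiction.
Qed.

Lemma Cnorm2_eq0 (z : C) : Cnorm2 z = 0 -> z = C0.
Proof. expand_C; intros Hz; f_equal; nra. Qed.

Lemma Csub_0_r (z : C) : Csub z C0 = z.
Proof. expand_C; f_equal; ring. Qed.

Lemma Cabs_ge0 (z : C) : 0 <= Cabs z.
Proof. apply sqrt_pos. Qed.

Lemma Cabs_sq (z : C) : Cabs z * Cabs z = Cnorm2 z.
Proof. apply sqrt_sqrt, Cnorm2_ge0. Qed.

Lemma Cabs_pos (z : C) : 0 < Cnorm2 z -> 0 < Cabs z.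
Proof. apply sqrt_lt_R0. Qed.

Lemma Cabs_mul (z w : C) : Cabs (Cmul z w) = Cabs z * Cabs w.
Proof. unfold Cabs; rewrite Cnorm2_mul; apply sqrt_mult; apply Cnorm2_ge0. Qed.

Lemma Cabs_scale (s : R) (z : C) : 0 <= s -> Cabs (Cscale s z) = s * Cabs z.
Proof.
  intros Hs; unfold Cabs; rewrite Cnorm2_scale, sqrt_mult, sqrt_square;
    auto using Cnorm2_ge0; nra.
Qed.

Lemma Cabs_1 : Cabs (mkC 1 0) = 1.
Proof. unfold Cabs, Cnorm2; simpl; replace (1 * 1 + 0 * 0) with 1 by ring; apply sqrt_1. Qed.

Lemma Cabs_lt_iff (z : C) (r : R) : 0 <= r -> Cabs z < r <-> Cnorm2 z < r * r.
Proof.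
  intros Hr; rewrite <- Cabs_sq; pose proof (Cabs_ge0 z); split; intros; nra.
Qed.

Lemma Cabs_add_ge (z w : C) : (Cabs z - Cabs w) * (Cabs z - Cabs w) <= Cnorm2 (Cadd z w).
Proof.
  pose proof (Cabs_sq z); pose proof (Cabs_sq w); pose proof (Cabs_ge0 z); pose proof (Cabs_ge0 w).
  assert (Hexp : Cnorm2 (Cadd z w) = Cnorm2 z + Cnorm2 w + 2 * (re z * re w + im z * im w))
    by (expand_C; ring).
  assert (Hcs : (re z * re w + im z * im w) * (re z * re w + im z * im w)
                <= (Cabs z * Cabs w) * (Cabs z * Cabs w)).
  { replace ((Cabs z * Cabs w) * (Cabs z * Cabs w)) with (Cnorm2 z * Cnorm2 w) by nra.
    unfold Cnorm2; pose proof (pow2_ge_0 (re z * im w - im z * re w)); nra. }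
  assert (Hprod : 0 <= Cabs z * Cabs w) by nra.
  assert (- (Cabs z * Cabs w) <= re z * re w + im z * im w) by nra.
  nra.
Qed.

Lemma Cabs_unit_polar (e : C) : exists u, Cabs u = 1 /\ e = Cscale (Cabs e) u.
Proof.
  destruct (Req_dec (Cabs e) 0) as [He | He].
  - exists (mkC 1 0); split.
    + exact Cabs_1.
    + assert (Cnorm2 e = 0) by (rewrite <- Cabs_sq, He; ring).
      rewrite He, (Cnorm2_eq0 e) by assumption; expand_C; f_equal; ring.
  - pose proof (Cabs_ge0 e).
    exists (Cscale (/ Cabs e) e); split.
    + rewrite Cabs_scale by (left; apply Rinv_0_lt_compat; lra); field; exact He.
    + destruct e; unfold Cscale; simpl; f_equal; field; exact He.
Qed.

Definition Cdiv (u w : C) : C := Cscale (/ Cnorm2 w) (Cmul u (Cconj w)).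

Lemma Cdiv_mulK (u w : C) : 0 < Cnorm2 w -> Cmul (Cdiv u w) w = u.
Proof. unfold Cdiv; expand_C; intros Hw; f_equal; field; lra. Qed.

Lemma Cmul_divK (y w : C) : 0 < Cnorm2 w -> Cdiv (Cmul y w) w = y.
Proof. unfold Cdiv; expand_C; intros Hw; f_equal; field; lra. Qed.

(** * Matrices acting on the upper half-space *)

Record Mat := mkMat { m11 : C; m12 : C; m21 : C; m22 : C }.

Definition mat_mul (A B : Mat) : Mat :=
  mkMat (Cadd (Cmul (m11 A) (m11 B)) (Cmul (m12 A) (m21 B)))
        (Cadd (Cmul (m11 A) (m12 B)) (Cmul (m12 A) (m22 B)))
        (Cadd (Cmul (m21 A) (m11 B)) (Cmul (m22 A) (m21 B)))
        (Cadd (Cmul (m21 A) (m12 B)) (Cmul (m22 A) (m22 B))).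

Definition mat_id : Mat := mkMat (mkC 1 0) C0 C0 (mkC 1 0).

Definition mat_det (M : Mat) : C := Csub (Cmul (m11 M) (m22 M)) (Cmul (m12 M) (m21 M)).

Definition mat_of (f : Mobius) : Mat := mkMat (ma f) (mb f) (mc f) (md f).

Definition ext_den (M : Mat) (p : H3pt) : R :=
  Cnorm2 (Cadd (Cmul (m21 M) (hz p)) (m22 M)) + Cnorm2 (m21 M) * (ht p * ht p).

Definition ext_num (M : Mat) (p : H3pt) : C :=
  Cadd (Cmul (Cadd (Cmul (m11 M) (hz p)) (m12 M)) (Cconj (Cadd (Cmul (m21 M) (hz p)) (m22 M))))
       (Cscale (ht p * ht p) (Cmul (m11 M) (Cconj (m21 M)))).

Definition mat_ext (M : Mat) (p : H3pt) : H3pt :=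
  mkH3 (Cscale (/ ext_den M p) (ext_num M p)) (Cabs (mat_det M) * ht p / ext_den M p).

Lemma poincare_ext_mat (f : Mobius) (p : H3pt) : poincare_ext f p = mat_ext (mat_of f) p.
Proof. reflexivity. Qed.

Lemma mat_det_mul (A B : Mat) : mat_det (mat_mul A B) = Cmul (mat_det A) (mat_det B).
Proof. destruct A, B; unfold mat_det, mat_mul; simpl; expand_C; f_equal; ring. Qed.

Lemma mat_of_det_pos (f : Mobius) : 0 < Cnorm2 (mat_det (mat_of f)).
Proof. apply Cnorm2_pos, mdet_nz. Qed.

Lemma ext_den_pos (M : Mat) (p : H3pt) :
  0 < Cnorm2 (mat_det M) -> 0 < ht p -> 0 < ext_den M p.
Proof.
  destruct M as [a b c d], p as [z t]; unfold ext_den, mat_det; simpl; intros Hdet Ht.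
  pose proof (Cnorm2_ge0 c); pose proof (Cnorm2_ge0 (Cadd (Cmul c z) d)).
  destruct (Req_dec (Cnorm2 c) 0) as [Hc | Hc].
  - apply Cnorm2_eq0 in Hc; subst c.
    replace (Cnorm2 (Csub (Cmul a d) (Cmul b C0))) with (Cnorm2 a * Cnorm2 d) in Hdet
      by (expand_C; ring).
    replace (Cnorm2 (Cadd (Cmul C0 z) d) + Cnorm2 C0 * (t * t)) with (Cnorm2 d)
      by (expand_C; ring).
    pose proof (Cnorm2_ge0 a); pose proof (Cnorm2_ge0 d); nra.
  - assert (0 < Cnorm2 c * (t * t)) by (apply Rmult_lt_0_compat; nra).
    lra.
Qed.

Lemma mat_ext_ht_pos (M : Mat) (p : H3pt) :
  0 < Cnorm2 (mat_det M) -> 0 < ht p -> 0 < ht (mat_ext M p).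
Proof.
  intros Hdet Ht; simpl; unfold Rdiv.
  apply Rmult_lt_0_compat; [apply Rmult_lt_0_compat |]; auto using Cabs_pos.
  apply Rinv_0_lt_compat, ext_den_pos; assumption.
Qed.

Lemma mat_ext_ht_sq (M : Mat) (p : H3pt) : 0 < ext_den M p ->
  ht (mat_ext M p) * ht (mat_ext M p)
  = Cnorm2 (mat_det M) * (ht p * ht p) / (ext_den M p * ext_den M p).
Proof.
  intros Hden; simpl; rewrite <- Cabs_sq; field; lra.
Qed.

(* Rewriting the squared height first removes the square root hidden in [Cabs (mat_det B)],
   so that the cocycle identities below become rational identities provable by [field]. *)
Lemma ext_den_comp (A B : Mat) (p : H3pt) : 0 < ext_den B p ->
  ext_den A (mat_ext B p) = ext_den (mat_mul A B) p / ext_den B p.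
Proof.
  intros Hden; unfold ext_den at 1; rewrite mat_ext_ht_sq by exact Hden.
  destruct A, B, p; unfold mat_ext, ext_den, ext_num, mat_mul in *; simpl in *.
  expand_C; field; lra.
Qed.

Lemma ext_num_comp (A B : Mat) (p : H3pt) : 0 < ext_den B p ->
  ext_num A (mat_ext B p) = Cscale (/ ext_den B p) (ext_num (mat_mul A B) p).
Proof.
  intros Hden; unfold ext_num at 1; rewrite mat_ext_ht_sq by exact Hden.
  destruct A, B, p; unfold mat_ext, ext_den, ext_num, mat_mul in *; simpl in *.
  expand_C; f_equal; field; lra.
Qed.

Lemma mat_ext_mul (A B : Mat) (p : H3pt) :
  0 < ext_den B p -> 0 < ext_den (mat_mul A B) p ->
  mat_ext A (mat_ext B p) = mat_ext (mat_mul A B) p.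
Proof.
  intros HB HAB; unfold mat_ext at 1.
  rewrite ext_den_comp, ext_num_comp by exact HB.
  unfold mat_ext; rewrite mat_det_mul, Cabs_mul; simpl; f_equal.
  - destruct (ext_num (mat_mul A B) p); unfold Cscale; simpl; f_equal; field; lra.
  - field; lra.
Qed.

Lemma mat_ext_id (p : H3pt) : mat_ext mat_id p = p.
Proof.
  assert (Hdet : mat_det mat_id = mkC 1 0) by (unfold mat_det, mat_id; expand_C; f_equal; ring).
  unfold mat_ext; rewrite Hdet, Cabs_1.
  destruct p as [[x y] t]; unfold ext_den, ext_num, mat_id; simpl; expand_C.
  f_equal; [f_equal |]; field.
Qed.

Fixpoint mat_prod (f : nat -> Mobius) (n : nat) : Mat :=
  match n with
  | O => mat_id
  | S k => mat_mul (mat_prod f k) (mat_of (f (S k)))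
  end.

Lemma mat_prod_det_pos (f : nat -> Mobius) (n : nat) : 0 < Cnorm2 (mat_det (mat_prod f n)).
Proof.
  induction n as [| n IH]; simpl.
  - unfold mat_det, mat_id; expand_C; lra.
  - rewrite mat_det_mul, Cnorm2_mul.
    apply Rmult_lt_0_compat; [exact IH | apply mat_of_det_pos].
Qed.

Lemma comp_act_mat_prod (f : nat -> Mobius) (n : nat) (p : H3pt) :
  0 < ht p -> comp_act f n p = mat_ext (mat_prod f n) p.
Proof.
  revert p; induction n as [| n IH]; intros p Hp; simpl.
  - symmetry; apply mat_ext_id.
  - rewrite poincare_ext_mat, IH by (apply mat_ext_ht_pos; auto using mat_of_det_pos).
    apply mat_ext_mul; apply ext_den_pos; auto using mat_of_det_pos.
    change (0 < Cnorm2 (mat_det (mat_prod f (S n)))); apply mat_prod_det_pos.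
Qed.

Definition mat_height (M : Mat) : R :=
  Cabs (mat_det M) / (Cnorm2 (m21 M) + Cnorm2 (m22 M)).

Lemma mat_ext_j_ht (M : Mat) : ht (mat_ext M j_pt) = mat_height M.
Proof.
  unfold mat_ext, mat_height, ext_den; simpl; unfold Rdiv; rewrite Rmult_1_r.
  f_equal; f_equal; destruct M; simpl; expand_C; ring.
Qed.

(* e^rho >= cosh rho >= 1 / (2 t). *)
Lemma exp_neg_hdist_le (q : H3pt) : 0 < ht q -> exp (- hdist j_pt q) <= 2 * ht q.
Proof.
  destruct q as [z t]; simpl; intros Ht; unfold hdist, arcosh, j_pt; simpl.
  set (X := 1 + (Cnorm2 (Csub C0 z) + (1 - t) * (1 - t)) / (2 * 1 * t)).
  assert (HX : / (2 * t) <= X).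
  { unfold X; pose proof (Cnorm2_ge0 (Csub C0 z)).
    replace (1 + (Cnorm2 (Csub C0 z) + (1 - t) * (1 - t)) / (2 * 1 * t))
      with (/ (2 * t) + (Cnorm2 (Csub C0 z) + t * t) / (2 * t)) by (field; lra).
    assert (0 <= (Cnorm2 (Csub C0 z) + t * t) / (2 * t))
      by (apply Rmult_le_pos; [nra | left; apply Rinv_0_lt_compat; lra]).
    lra. }
  assert (0 < / (2 * t)) by (apply Rinv_0_lt_compat; lra).
  pose proof (sqrt_pos (X * X - 1)).
  rewrite exp_Ropp, exp_ln by lra.
  replace (2 * t) with (/ / (2 * t)) by (field; lra).
  apply Rinv_le_contravar; lra.
Qed.

(** * The image disc of a Möbius map *)

(* [image_form M y > 0] iff M^-1(y) = (d y - b) / (a - c y) lies in D.  When [image_den M > 0]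
   this is the disc M(D), with centre [image_center M] and radius [image_radius M]. *)
Definition image_form (M : Mat) (y : C) : R :=
  Cnorm2 (Csub (m11 M) (Cmul (m21 M) y)) - Cnorm2 (Csub (Cmul (m22 M) y) (m12 M)).

Definition image_den (M : Mat) : R := Cnorm2 (m22 M) - Cnorm2 (m21 M).

Definition image_center_num (M : Mat) : C :=
  Csub (Cmul (m12 M) (Cconj (m22 M))) (Cmul (m11 M) (Cconj (m21 M))).

Definition image_center (M : Mat) : C := Cscale (/ image_den M) (image_center_num M).

Definition image_radius (M : Mat) : R := Cabs (mat_det M) / image_den M.

Lemma image_form_scaled (M : Mat) (y : C) :
  image_den M * image_form M y
  = Cnorm2 (mat_det M) - Cnorm2 (Csub (Cscale (image_den M) y) (image_center_num M)).
Proof.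
  destruct M; unfold image_den, image_form, image_center_num, mat_det; simpl; expand_C; ring.
Qed.

Lemma image_form_expand (M : Mat) (y : C) :
  image_form M y
  = - image_den M * Cnorm2 y
    + 2 * (re y * re (image_center_num M) + im y * im (image_center_num M))
    + Cnorm2 (m11 M) - Cnorm2 (m12 M).
Proof.
  destruct M; unfold image_den, image_form, image_center_num; simpl; expand_C; ring.
Qed.

Lemma image_center_num_norm (M : Mat) :
  Cnorm2 (image_center_num M)
  = Cnorm2 (mat_det M) + (Cnorm2 (m12 M) - Cnorm2 (m11 M)) * image_den M.
Proof.
  destruct M; unfold image_den, image_center_num, mat_det; simpl; expand_C; ring.
Qed.

Lemma image_form_pos_in_image (g : Mobius) (y : C) :
  0 < image_form (mat_of g) y ->
  exists z, in_disc z /\ mob_den g z <> C0 /\ y = mob_apply g z.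
Proof.
  destruct g as [a b c d Hdet]; unfold image_form; simpl; intros Hy.
  set (w := Csub a (Cmul c y)) in *; set (u := Csub (Cmul d y) b) in *.
  assert (Hw : 0 < Cnorm2 w) by (pose proof (Cnorm2_ge0 u); lra).
  set (z := Cdiv u w).
  assert (Hz : Cmul z w = u) by (apply Cdiv_mulK; exact Hw).
  assert (Hden : Cmul (Cadd (Cmul c z) d) w = Csub (Cmul a d) (Cmul b c)).
  { transitivity (Cadd (Cmul c (Cmul z w)) (Cmul d w)); [expand_C; f_equal; ring |].
    rewrite Hz; unfold u, w; expand_C; f_equal; ring. }
  assert (Hnum : Cadd (Cmul a z) b = Cmul y (Cadd (Cmul c z) d)).
  { transitivity (Cadd (Cmul y (Cadd (Cmul c z) d)) (Csub (Cmul z w) u));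
      [unfold u, w; expand_C; f_equal; ring |].
    rewrite Hz; expand_C; f_equal; ring. }
  pose proof (Cnorm2_pos _ Hdet) as Hdet_pos.
  rewrite <- Hden, Cnorm2_mul in Hdet_pos.
  pose proof (Cnorm2_ge0 (Cadd (Cmul c z) d)).
  assert (Hden_pos : 0 < Cnorm2 (Cadd (Cmul c z) d)) by nra.
  exists z; repeat split.
  - apply Cabs_lt_iff; [lra |].
    assert (Cnorm2 z * Cnorm2 w = Cnorm2 u) by (rewrite <- Cnorm2_mul, Hz; reflexivity).
    nra.
  - intros Hzero; unfold mob_den in Hzero; simpl in Hzero.
    rewrite Hzero in Hden_pos; expand_C; lra.
  - change (y = Cdiv (Cadd (Cmul a z) b) (Cadd (Cmul c z) d)).
    rewrite Hnum, Cmul_divK by exact Hden_pos; reflexivity.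
Qed.

Lemma image_form_unbounded_of_den_lt0 (M : Mat) :
  image_den M < 0 -> exists y, 0 < image_form M y /\ 1 <= Cnorm2 y.
Proof.
  intros Hm; set (m := image_den M) in *.
  pose proof (Cnorm2_ge0 (m11 M)); pose proof (Cnorm2_ge0 (m12 M)).
  set (s := 1 + Cnorm2 (m12 M) / - m).
  assert (Hs : - m * s = - m + Cnorm2 (m12 M)) by (unfold s; field; lra).
  assert (Hs1 : 1 <= s).
  { unfold s; assert (0 <= Cnorm2 (m12 M) / - m)
      by (apply Rmult_le_pos; [lra | left; apply Rinv_0_lt_compat; lra]).
    lra. }
  assert (Hms : Cnorm2 (m12 M) < - m * (s * s)).
  { replace (- m * (s * s)) with ((- m + Cnorm2 (m12 M)) * s) by (rewrite <- Hs; ring).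
    nra. }
  (* The linear terms cancel in the sum over +s and -s. *)
  assert (Hsum : 0 < image_form M (mkC s 0) + image_form M (mkC (- s) 0)).
  { rewrite !image_form_expand; fold m.
    replace (Cnorm2 (mkC s 0)) with (s * s) by (unfold Cnorm2; simpl; ring).
    replace (Cnorm2 (mkC (- s) 0)) with (s * s) by (unfold Cnorm2; simpl; ring).
    cbn [re im]; lra. }
  destruct (Rlt_or_le 0 (image_form M (mkC s 0))) as [Hp | Hp];
    [exists (mkC s 0) | exists (mkC (- s) 0)]; (split; [lra | unfold Cnorm2; simpl; nra]).
Qed.

Lemma image_form_unbounded_of_den_eq0 (M : Mat) :
  0 < Cnorm2 (mat_det M) -> image_den M = 0 ->
  exists y, 0 < image_form M y /\ 1 <= Cnorm2 y.
Proof.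
  intros Hdet Hm; set (v := image_center_num M).
  pose proof (Cnorm2_ge0 (m11 M)); pose proof (Cnorm2_ge0 (m12 M)).
  assert (Hv : 0 < Cnorm2 v)
    by (unfold v; rewrite image_center_num_norm, Hm; lra).
  set (s := (2 + Cnorm2 (m12 M)) / Cnorm2 v + 1).
  assert (Hsv : s * Cnorm2 v = 2 + Cnorm2 (m12 M) + Cnorm2 v)
    by (unfold s; field; lra).
  assert (Hs1 : 1 <= s).
  { unfold s; assert (0 <= (2 + Cnorm2 (m12 M)) / Cnorm2 v)
      by (apply Rmult_le_pos; [lra | left; apply Rinv_0_lt_compat; lra]).
    lra. }
  exists (Cscale s v); split.
  - rewrite image_form_expand, Hm; fold v.
    replace (re (Cscale s v) * re v + im (Cscale s v) * im v) with (s * Cnorm2 v)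
      by (unfold Cnorm2, Cscale; simpl; ring).
    lra.
  - rewrite Cnorm2_scale; nra.
Qed.

Lemma image_den_pos (M : Mat) :
  0 < Cnorm2 (mat_det M) -> (forall y, 0 < image_form M y -> Cnorm2 y < 1) ->
  0 < image_den M.
Proof.
  intros Hdet Hbounded.
  destruct (Rlt_or_le 0 (image_den M)) as [Hm | [Hm | Hm]]; [exact Hm | exfalso | exfalso].
  - destruct (image_form_unbounded_of_den_lt0 M Hm) as [y [Hy Hy1]].
    specialize (Hbounded y Hy); lra.
  - destruct (image_form_unbounded_of_den_eq0 M Hdet Hm) as [y [Hy Hy1]].
    specialize (Hbounded y Hy); lra.
Qed.

Lemma image_form_pos_of_disc (M : Mat) (y : C) :
  0 < image_den M -> Cabs (Csub y (image_center M)) < image_radius M ->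
  0 < image_form M y.
Proof.
  intros Hm Hy; pose proof (image_form_scaled M y) as Hscaled.
  set (m := image_den M) in *.
  assert (Hr : 0 <= image_radius M).
  { unfold image_radius; apply Rmult_le_pos; [apply Cabs_ge0 | left; apply Rinv_0_lt_compat, Hm]. }
  apply Cabs_lt_iff in Hy; [| exact Hr].
  replace (Csub (Cscale m y) (image_center_num M)) with (Cscale m (Csub y (image_center M)))
    in Hscaled by (unfold image_center; fold m; expand_C; f_equal; field; lra).
  assert (Hrm : m * image_radius M = Cabs (mat_det M))
    by (unfold image_radius; fold m; field; lra).
  rewrite Cnorm2_scale, <- Cabs_sq, <- Hrm in Hscaled.
  assert (Hprod : m * image_form M y
    = m * m * (image_radius M * image_radius M - Cnorm2 (Csub y (image_center M))))
    by (rewrite Hscaled; ring).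
  assert (0 < m * image_form M y)
    by (rewrite Hprod; apply Rmult_lt_0_compat; [apply Rmult_lt_0_compat |]; lra).
  nra.
Qed.

Lemma Rle_of_forall_lt (e r1 r2 : R) :
  0 < r1 -> (forall rho, 0 <= rho < r1 -> e + rho < r2) -> e + r1 <= r2.
Proof.
  intros Hr1 H; destruct (Rle_lt_dec (e + r1) r2) as [Hle | Hlt]; [exact Hle | exfalso].
  destruct (Rle_lt_dec r2 e).
  - specialize (H 0); lra.
  - specialize (H (r2 - e)); lra.
Qed.

Lemma disc_subset_dist (c1 c2 : C) (r1 r2 : R) :
  0 < r1 -> (forall y, Cabs (Csub y c1) < r1 -> Cabs (Csub y c2) < r2) ->
  Cabs (Csub c1 c2) + r1 <= r2.
Proof.
  intros Hr1 Hsub; apply Rle_of_forall_lt; [exact Hr1 |]; intros rho Hrho.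
  destruct (Cabs_unit_polar (Csub c1 c2)) as [u [Hu Hpolar]].
  set (y := Cadd c1 (Cscale rho u)).
  assert (Hy1 : Csub y c1 = Cscale rho u) by (unfold y; expand_C; f_equal; ring).
  assert (Hy2 : Csub y c2 = Cscale (Cabs (Csub c1 c2) + rho) u).
  { transitivity (Cadd (Csub c1 c2) (Cscale rho u)); [unfold y; expand_C; f_equal; ring |].
    rewrite Hpolar at 1; expand_C; f_equal; ring. }
  pose proof (Cabs_ge0 (Csub c1 c2)).
  specialize (Hsub y).
  rewrite Hy1, Hy2, !Cabs_scale, Hu in Hsub by lra.
  lra.
Qed.

(* Multiplied by [image_den]: the disc g(D) has radius < delta and lies in D. *)
Lemma image_disc_bounds (delta : R) (g : Mobius) :
  maps_disc_into_disc g -> image_disc_radius_lt g delta ->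
  Cabs (mat_det (mat_of g)) < delta * image_den (mat_of g) /\
  Cabs (image_center_num (mat_of g)) + Cabs (mat_det (mat_of g)) <= image_den (mat_of g).
Proof.
  intros Hmap [w [r [[Hr Himg] Hrdelta]]].
  assert (Hin : forall y, 0 < image_form (mat_of g) y -> in_disc y /\ Cabs (Csub y w) < r).
  { intros y Hy; destruct (image_form_pos_in_image g y Hy) as [z [Hz [Hden ->]]].
    split; [apply Hmap, Hz | apply Himg; eauto]. }
  assert (Hm : 0 < image_den (mat_of g)).
  { apply image_den_pos; [apply mat_of_det_pos |].
    intros y Hy; destruct (Hin y Hy) as [Hy1 _].
    apply Cabs_lt_iff in Hy1; lra. }
  assert (Hrad : 0 < image_radius (mat_of g)).
  { apply Rdiv_lt_0_compat; [apply Cabs_pos, mat_of_det_pos | exact Hm]. }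
  pose proof (disc_subset_dist _ w _ r Hrad
    (fun y Hy => proj2 (Hin y (image_form_pos_of_disc _ y Hm Hy)))) as Hw.
  assert (H0 : Cabs (Csub (image_center (mat_of g)) C0) + image_radius (mat_of g) <= 1).
  { apply disc_subset_dist; [exact Hrad |]; intros y Hy; rewrite Csub_0_r.
    apply Hin, image_form_pos_of_disc; assumption. }
  rewrite Csub_0_r in H0.
  pose proof (Cabs_ge0 (Csub (image_center (mat_of g)) w)).
  unfold image_center, image_radius in *.
  rewrite Cabs_scale in H0 by (left; apply Rinv_0_lt_compat, Hm).
  set (m := image_den (mat_of g)) in *.
  assert (Hinv : 0 < / m) by (apply Rinv_0_lt_compat, Hm).
  assert (Hmm : m * / m = 1) by (field; lra).
  unfold Rdiv in *; split; nra.
Qed.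

(** * Shrinking of the image discs *)

Lemma image_den_mul (M G : Mat) :
  image_den G * image_den (mat_mul M G)
  = Cnorm2 (Cadd (Cscale (image_den G) (m22 M)) (Cmul (m21 M) (image_center_num G)))
    - Cnorm2 (mat_det G) * Cnorm2 (m21 M).
Proof.
  destruct M, G; unfold image_den, image_center_num, mat_det, mat_mul; simpl; expand_C; ring.
Qed.

Lemma image_den_mul_lower (M G : Mat) :
  0 < image_den M -> 0 < image_den G ->
  Cabs (image_center_num G) + Cabs (mat_det G) <= image_den G ->
  (Cabs (m22 M) - Cabs (m21 M))
    * (image_den G * (Cabs (m22 M) - Cabs (m21 M)) + 2 * Cabs (m21 M) * Cabs (mat_det G))
  <= image_den (mat_mul M G).
Proof.
  intros HM HG Hcontain; pose proof (image_den_mul M G) as Hmul.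
  (* Reverse triangle inequality for |m d + c v|, where |v| <= m - |det G|. *)
  pose proof (Cabs_add_ge (Cscale (image_den G) (m22 M)) (Cmul (m21 M) (image_center_num G)))
    as Htri.
  rewrite Cabs_scale, Cabs_mul in Htri by lra.
  unfold image_den in HM.
  rewrite <- (Cabs_sq (m22 M)), <- (Cabs_sq (m21 M)) in HM.
  rewrite <- (Cabs_sq (m21 M)) in Hmul.
  rewrite <- (Cabs_sq (mat_det G)) in Hmul.
  set (m := image_den G) in *; set (X := Cabs (m22 M)) in *; set (Y := Cabs (m21 M)) in *;
    set (V := Cabs (image_center_num G)) in *; set (Dl := Cabs (mat_det G)) in *.
  assert (HX : 0 <= X) by apply Cabs_ge0; assert (HY : 0 <= Y) by apply Cabs_ge0.
  assert (HV : 0 <= V) by apply Cabs_ge0; assert (HDl : 0 <= Dl) by apply Cabs_ge0.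
  assert (HYX : Y < X) by nra.
  assert (Hlow : 0 <= m * (X - Y) + Y * Dl <= m * X - Y * V).
  { split; [nra |]. assert (Y * V <= Y * (m - Dl)) by (apply Rmult_le_compat_l; lra). lra. }
  assert (Hsq : (m * (X - Y) + Y * Dl) * (m * (X - Y) + Y * Dl) <= (m * X - Y * V) * (m * X - Y * V))
    by nra.
  apply (Rmult_le_reg_l m); [exact HG |].
  rewrite Hmul; nra.
Qed.

Lemma shrink_factor_bound (delta m Dl X Y : R) :
  0 < delta < 1 -> 0 <= Y <= X -> 0 <= Dl < delta * m ->
  (1 - delta) * ((X + Y) * (m * (X - Y) + 2 * Y * Dl)) <= 2 * (m - Dl) * (Y * Y + X * X).
Proof.
  intros Hdelta HXY HDl.
  assert (Hm : 0 < m) by nra.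
  assert (Hfactor : (X + Y) * (m * (X - Y) + 2 * Y * Dl) <= 2 * m * (Y * Y + X * X)).
  { assert (Y * Dl <= Y * m) by (apply Rmult_le_compat_l; nra).
    assert ((X + Y) * (m * (X - Y) + 2 * Y * Dl) <= (X + Y) * (m * (X - Y) + 2 * Y * m))
      by (apply Rmult_le_compat_l; lra).
    assert ((X + Y) * (X + Y) <= 2 * (Y * Y + X * X)) by nra.
    assert (m * ((X + Y) * (X + Y)) <= m * (2 * (Y * Y + X * X)))
      by (apply Rmult_le_compat_l; lra).
    lra. }
  assert ((1 - delta) * ((X + Y) * (m * (X - Y) + 2 * Y * Dl))
          <= (1 - delta) * (2 * m * (Y * Y + X * X)))
    by (apply Rmult_le_compat_l; lra).
  assert ((1 - delta) * m * (2 * (Y * Y + X * X)) <= (m - Dl) * (2 * (Y * Y + X * X)))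
    by (apply Rmult_le_compat_r; nra).
  lra.
Qed.

(* With K = |det M|, X = |d|, Y = |c| for M = [[a, b], [c, d]], and m, Dl the [image_den] and
   |det| of G, the terms are the height of M(j) and the radii of M(D) and MG(D). *)
Lemma radius_decrement_bound (delta K m Dl X Y Dp : R) :
  0 < delta < 1 -> 0 < K -> 0 <= Y < X -> 0 <= Dl < delta * m ->
  (X - Y) * (m * (X - Y) + 2 * Y * Dl) <= Dp ->
  0 < Dp /\
  K / (Y * Y + X * X) <= 2 / (1 - delta) * (K / (X * X - Y * Y) - K * Dl / Dp).
Proof.
  intros Hdelta HK HXY HDl HDp.
  assert (Hm : 0 < m) by nra.
  set (L := (X - Y) * (m * (X - Y) + 2 * Y * Dl)) in HDp.
  set (P := (X + Y) * (m * (X - Y) + 2 * Y * Dl)).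
  set (S := Y * Y + X * X).
  assert (HL : 0 < L) by (unfold L; apply Rmult_lt_0_compat; nra).
  assert (HP : 0 < P) by (unfold P; apply Rmult_lt_0_compat; nra).
  assert (HS : 0 < S) by (unfold S; nra).
  split; [lra |].
  assert (Hdrop : K * Dl / Dp <= K * Dl / L).
  { unfold Rdiv; apply Rmult_le_compat_l; [nra | apply Rinv_le_contravar; lra]. }
  assert (Hgap : K / (X * X - Y * Y) - K * Dl / L = K * (m - Dl) / P).
  { unfold L, P; field; split; nra. }
  assert (Hmain : (1 - delta) / 2 * (K / S) <= K * (m - Dl) / P).
  { replace ((1 - delta) / 2 * (K / S)) with (K * ((1 - delta) * P) * / (2 * S * P))
      by (field; lra).
    replace (K * (m - Dl) / P) with (K * (2 * (m - Dl) * S) * / (2 * S * P))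
      by (field; lra).
    apply Rmult_le_compat_r; [left; apply Rinv_0_lt_compat; nra |].
    apply Rmult_le_compat_l; [lra |].
    apply shrink_factor_bound; lra. }
  replace (K / S) with (2 / (1 - delta) * ((1 - delta) / 2 * (K / S))) by (field; lra).
  apply Rmult_le_compat_l; [apply Rlt_le, Rdiv_lt_0_compat; lra | lra].
Qed.

Lemma mat_radius_step (delta : R) (M G : Mat) :
  0 < delta < 1 -> 0 < Cnorm2 (mat_det M) -> 0 < image_den M ->
  Cabs (mat_det G) < delta * image_den G ->
  Cabs (image_center_num G) + Cabs (mat_det G) <= image_den G ->
  0 < image_den (mat_mul M G) /\
  mat_height M <= 2 / (1 - delta) * (image_radius M - image_radius (mat_mul M G)).
Proof.
  intros Hdelta HdetM HM Hrad Hcontain.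
  assert (HG : 0 < image_den G) by (pose proof (Cabs_ge0 (mat_det G)); nra).
  pose proof (image_den_mul_lower M G HM HG Hcontain) as Hlower.
  assert (HYX : 0 <= Cabs (m21 M) < Cabs (m22 M)).
  { unfold image_den in HM; rewrite <- (Cabs_sq (m22 M)), <- (Cabs_sq (m21 M)) in HM.
    pose proof (Cabs_ge0 (m21 M)); pose proof (Cabs_ge0 (m22 M)); split; nra. }
  unfold mat_height, image_radius; rewrite mat_det_mul, Cabs_mul.
  replace (image_den M) with (Cabs (m22 M) * Cabs (m22 M) - Cabs (m21 M) * Cabs (m21 M))
    by (unfold image_den; rewrite !Cabs_sq; ring).
  rewrite <- (Cabs_sq (m21 M)), <- (Cabs_sq (m22 M)).
  apply radius_decrement_bound with (m := image_den G); auto using Cabs_pos.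
  split; [apply Cabs_ge0 | exact Hrad].
Qed.

Lemma mat_prod_radius_step (delta : R) (f : nat -> Mobius) :
  0 < delta < 1 ->
  (forall n : nat, (1 <= n)%nat ->
     maps_disc_into_disc (f n) /\ image_disc_radius_lt (f n) delta) ->
  forall n, 0 < image_den (mat_prod f n) /\
    mat_height (mat_prod f n)
      <= 2 / (1 - delta) * (image_radius (mat_prod f n) - image_radius (mat_prod f (S n))).
Proof.
  intros Hdelta Hf.
  assert (Hstep : forall n, 0 < image_den (mat_prod f n) ->
      0 < image_den (mat_prod f (S n)) /\
      mat_height (mat_prod f n)
        <= 2 / (1 - delta) * (image_radius (mat_prod f n) - image_radius (mat_prod f (S n)))).
  { intros n Hn; destruct (Hf (S n)) as [Hmap Hrad]; [lia |].
    destruct (image_disc_bounds delta _ Hmap Hrad).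
    apply mat_radius_step; auto using mat_prod_det_pos. }
  assert (Hden : forall n, 0 < image_den (mat_prod f n)).
  { induction n as [| n IH]; [unfold image_den; simpl; expand_C; lra | apply Hstep, IH]. }
  intros n; split; [apply Hden | apply Hstep, Hden].
Qed.

(** * Series *)

Lemma telescoping_series_cv (s R : nat -> R) :
  (forall n, 0 <= s n) -> (forall n, 0 <= R n) -> (forall n, s n <= R n - R (S n)) ->
  exists l, infinite_sum s l.
Proof.
  intros Hs HR Htel.
  assert (Hpartial : forall n, sum_f_R0 s n <= R O - R (S n)).
  { induction n as [| n IH]; simpl; [apply Htel | specialize (Htel (S n)); lra]. }
  destruct (growing_cv (sum_f_R0 s)) as [l Hl].
  - intros n; simpl; specialize (Hs (S n)); lra.
  - exists (R O); intros x [n ->]; specialize (Hpartial n); specialize (HR (S n)); lra.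
  - exists l; exact Hl.
Qed.

Lemma infinite_sum_terms_cv0 (s : nat -> R) (l : R) : infinite_sum s l -> Un_cv s 0.
Proof.
  intros Hsum eps Heps.
  destruct (Hsum (eps / 2)) as [N HN]; [lra |].
  exists (S N); intros [| n] Hn; [lia |].
  specialize (HN n ltac:(lia)) as H1; specialize (HN (S n) ltac:(lia)) as H2.
  unfold Rdist in *; simpl in H2.
  rewrite Rminus_0_r.
  apply Rabs_def2 in H1; apply Rabs_def2 in H2; apply Rabs_def1; lra.
Qed.

Lemma escaping_of_summable (d : nat -> R) (l : R) :
  infinite_sum (fun n => exp (- d n)) l ->
  forall M, exists N, forall n, (N <= n)%nat -> M < d n.
Proof.
  intros Hsum M.
  destruct (infinite_sum_terms_cv0 _ _ Hsum (exp (- M)) (exp_pos _)) as [N HN].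
  exists N; intros n Hn; specialize (HN n Hn).
  unfold Rdist in HN; rewrite Rminus_0_r, Rabs_pos_eq in HN by (left; apply exp_pos).
  apply exp_lt_inv in HN; lra.
Qed.

Theorem theorem1p5 (delta : R) (f : nat -> Mobius) :
  0 < delta -> delta < 1 ->
  (forall n : nat, (1 <= n)%nat ->
     maps_disc_into_disc (f n) /\ image_disc_radius_lt (f n) delta) ->
  rapid_escape (fun n => comp_act f (S n)).
Proof.
  intros Hdelta0 Hdelta1 Hf.
  pose proof (mat_prod_radius_step delta f (conj Hdelta0 Hdelta1) Hf) as Hstep.
  set (s := fun n => exp (- hdist j_pt (comp_act f (S n) j_pt))).
  assert (Hs : forall n, s n <= 2 * mat_height (mat_prod f (S n))).
  { intros n; unfold s; rewrite comp_act_mat_prod, <- mat_ext_j_ht by (simpl; lra).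
    apply exp_neg_hdist_le, mat_ext_ht_pos; [apply mat_prod_det_pos | simpl; lra]. }
  destruct (telescoping_series_cv s
              (fun n => 2 * (2 / (1 - delta)) * image_radius (mat_prod f (S n)))) as [l Hl].
  - intros n; left; apply exp_pos.
  - intros n; apply Rmult_le_pos; [apply Rlt_le, Rmult_lt_0_compat, Rdiv_lt_0_compat; lra |].
    apply Rlt_le, Rdiv_lt_0_compat; [apply Cabs_pos, mat_prod_det_pos | apply Hstep].
  - intros n; specialize (Hs n); destruct (Hstep (S n)) as [_ Hle]; nra.
  - split; [exact (escaping_of_summable _ l Hl) | exists l; exact Hl].
Qed.
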